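(* (a) If $A\in\mathcal{L}$, then $\Omega\setminus A\in\mathcal{U}$. (b) $\mathcal{U}$ is a quadratic algebra of subsets of $\Omega$.
   Context: $\Omega$ is the set of infinite sequences $\alpha_0\alpha_1\alpha_2\cdots$ with $\alpha_k\in\{0,1\}$ and $\alpha_0=0$. For $A\subseteq\Omega$ and $n\ge0$, $A^{(n)}=\{\omega\in\Omega:\text{there is }\omega'\in A\text{ whose first }n+1\text{ entries agree with those of }\omega\}$. $A$ is a lower set if $A=\bigcap_n A^{(n)}$; $\mathcal{L}$ is the collection of lower sets. $A$ is an upper set if $A=\bigcup_n\big(\Omega\setminus(\Omega\setminus A)^{(n)}\big)$; $\mathcal{U}$ is the collection of upper sets. A collection $Q$ of subsets of a set $S$ is a quadratic algebra if $\emptyset,S\in Q$ and whenever $A,B,C\in Q$ are mutually disjoint with $A\cup B,A\cup C,B\cup C\in Q$, then $A\cup B\cup C\in Q$. *)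

From Stdlib Require Import Arith.

(* Omega: infinite 0/1 sequences (bool, false = 0) with first entry 0. *)
Definition Omega : Type := { a : nat -> bool | a 0 = false }.

Definition seqOf (w : Omega) : nat -> bool := proj1_sig w.

Definition OSet := Omega -> Prop.

Definition agree (n : nat) (w w' : Omega) : Prop :=
  forall k, k <= n -> seqOf w k = seqOf w' k.

Definition approx (A : OSet) (n : nat) : OSet :=
  fun w => exists w', A w' /\ agree n w w'.

Definition complO (A : OSet) : OSet := fun w => ~ A w.

Definition is_lower (A : OSet) : Prop :=
  forall w, A w <-> (forall n, approx A n w).

Definition is_upper (A : OSet) : Prop :=
  forall w, A w <-> (exists n, ~ approx (complO A) n w).

Definition quadratic_algebra (S : Type) (Q : (S -> Prop) -> Prop) : Prop :=
  Q (fun _ => False) /\ Q (fun _ => True) /\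
  forall A B C : S -> Prop,
    Q A -> Q B -> Q C ->
    (forall x, ~ (A x /\ B x)) ->
    (forall x, ~ (A x /\ C x)) ->
    (forall x, ~ (B x /\ C x)) ->
    Q (fun x => A x \/ B x) ->
    Q (fun x => A x \/ C x) ->
    Q (fun x => B x \/ C x) ->
    Q (fun x => A x \/ B x \/ C x).

From Stdlib Require Import Classical.

(* Upper sets are exactly the open sets of the product topology on Omega, and
   lower sets the closed ones; so (a) is "the complement of a closed set is open".
   An upper set family containing the empty and the full set and closed under
   binary unions is trivially a quadratic algebra, since A u B u C = (A u B) u C. *)

Lemma quadratic_algebra_of_union_closed (S : Type) (Q : (S -> Prop) -> Prop) :
  (forall A B : S -> Prop, (forall x, A x <-> B x) -> Q A -> Q B) ->
  Q (fun _ => False) -> Q (fun _ => True) ->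
  (forall A B : S -> Prop, Q A -> Q B -> Q (fun x => A x \/ B x)) ->
  quadratic_algebra S Q.
Proof.
  intros Qext Q0 QT QU; split; [exact Q0 | split; [exact QT |]].
  intros A B C _ _ QC _ _ _ QAB _ _.
  apply (Qext (fun x => (A x \/ B x) \/ C x)); [tauto | exact (QU _ _ QAB QC)].
Qed.

Lemma agree_refl (n : nat) (w : Omega) : agree n w w.
Proof. now intros k _. Qed.

Lemma approx_sub (A : OSet) (n : nat) (w : Omega) : A w -> approx A n w.
Proof. intros Aw; exists w; split; [exact Aw | apply agree_refl]. Qed.

Lemma approx_mono (A B : OSet) (n : nat) (w : Omega) :
  (forall x, A x -> B x) -> approx A n w -> approx B n w.
Proof. intros AB [w' [Aw' agr]]; exists w'; split; [apply AB |]; assumption. Qed.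

(* The inclusion "exists n, ~ approx (complO U) n w -> U w" holds for every U. *)
Lemma upper_intro (U : OSet) :
  (forall w, U w -> exists n, ~ approx (complO U) n w) -> is_upper U.
Proof.
  intros H w; split; [apply H |].
  intros [n Hn]; apply NNPP; intros nUw.
  exact (Hn (approx_sub (complO U) n w nUw)).
Qed.

Lemma upper_ext (U V : OSet) :
  (forall w, U w <-> V w) -> is_upper U -> is_upper V.
Proof.
  intros UV HU; apply upper_intro; intros w Vw.
  destruct (proj1 (HU w) (proj2 (UV w) Vw)) as [n Hn].
  exists n; intros Vn; apply Hn.
  revert Vn; apply approx_mono; intros x nVx Ux; apply nVx, UV, Ux.
Qed.

Lemma upper_empty : is_upper (fun _ => False).
Proof. apply upper_intro; intros w []. Qed.

Lemma upper_full : is_upper (fun _ => True).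
Proof. apply upper_intro; intros w _; exists 0; intros [w' [nT _]]; exact (nT I). Qed.

Lemma upper_union (U V : OSet) :
  is_upper U -> is_upper V -> is_upper (fun x => U x \/ V x).
Proof.
  intros HU HV; apply upper_intro; intros w [Uw | Vw].
  - destruct (proj1 (HU w) Uw) as [n Hn]; exists n; intros UVn; apply Hn.
    revert UVn; apply approx_mono; intros x nUVx Ux; apply nUVx; now left.
  - destruct (proj1 (HV w) Vw) as [n Hn]; exists n; intros UVn; apply Hn.
    revert UVn; apply approx_mono; intros x nUVx Vx; apply nUVx; now right.
Qed.

Lemma upper_compl_lower (A : OSet) : is_lower A -> is_upper (complO A).
Proof.
  intros HA; apply upper_intro; intros w nAw.
  destruct (not_all_ex_not _ _ (fun h => nAw (proj2 (HA w) h))) as [n Hn].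
  exists n; intros Cn; apply Hn.
  revert Cn; apply approx_mono; intros x nnAx; exact (NNPP _ nnAx).
Qed.

Theorem theorem4p4 :
  (forall A : OSet, is_lower A -> is_upper (complO A)) /\
  quadratic_algebra Omega is_upper.
Proof.
  split; [exact upper_compl_lower |].
  apply quadratic_algebra_of_union_closed.
  - exact upper_ext.
  - exact upper_empty.
  - exact upper_full.
  - exact upper_union.
Qed.
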